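(* Let $R$ be a DT ring. Then $R/J(R)\cong R_1\times R_2$, where $R_1$ is either the zero ring or a nonzero Boolean ring, and $R_2$ is either the zero ring or a nonzero Yaqub ring.
   Context: All rings are associative with identity. $J(R)$ is the Jacobson radical, $U(R)$ the group of units. $\Delta(R)=\{x\in R: x+u\in U(R)\text{ for all }u\in U(R)\}$. $\mathrm{Tr}(R)=\{x\in R: x^3=x\}$ (tripotent elements). A ring $R$ is a DT ring ($\Delta$-tripotent ring) if every $r\in R$ can be written $r=e+d$ with $e\in\mathrm{Tr}(R)$ and $d\in\Delta(R)$. A Boolean ring is a ring in which every element is idempotent. A Yaqub ring is a ring that is a subdirect product of copies of $\mathbb{Z}_3$ (equivalently, a ring in which $3$ is nilpotent and $x^3=x$ for all $x$). *)

From HB Require Import structures.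
From mathcomp Require Import all_boot all_order all_algebra.
Set Implicit Arguments. Unset Strict Implicit. Unset Printing Implicit Defensive.
Import GRing.Theory.
Local Open Scope ring_scope.

(* Rings: associative with identity, possibly noncommutative, possibly the
   zero ring: MathComp's pzRingType. Units are defined as two-sided
   invertible elements (no unitRingType structure needed). *)

Definition is_unit (R : pzRingType) (x : R) : Prop :=
  exists y : R, x * y = 1 /\ y * x = 1.

Definition Delta (R : pzRingType) (x : R) : Prop :=
  forall u : R, is_unit u -> is_unit (x + u).

Definition tripotent (R : pzRingType) (x : R) : Prop := x ^+ 3 = x.

Definition DT_ring (R : pzRingType) : Prop :=
  forall r : R, exists e d : R, tripotent e /\ Delta d /\ r = e + d.

Definition left_ideal (R : pzRingType) (I : R -> Prop) : Prop :=
  I 0 /\ (forall x y, I x -> I y -> I (x - y)) /\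
  (forall r x, I x -> I (r * x)).

Definition maximal_left_ideal (R : pzRingType) (I : R -> Prop) : Prop :=
  left_ideal I /\ ~ I 1 /\
  forall K : R -> Prop, left_ideal K -> (forall x, I x -> K x) ->
    (forall x, K x -> I x) \/ K 1.

Definition jacobson (R : pzRingType) (x : R) : Prop :=
  forall I : R -> Prop, maximal_left_ideal I -> I x.

Definition zero_ring (R : pzRingType) : Prop := forall x : R, x = 0.

Definition boolean_ring (R : pzRingType) : Prop := forall x : R, x ^+ 2 = x.

Definition yaqub_ring (R : pzRingType) : Prop :=
  (exists n : nat, (3%:R : R) ^+ n = 0) /\ forall x : R, x ^+ 3 = x.

From HB Require Import structures.
From mathcomp Require Import all_boot all_order all_algebra boolp.
Import GRing.Theory.
Local Open Scope ring_scope.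
Local Open Scope quotient_scope.

Set Implicit Arguments. Unset Strict Implicit. Unset Printing Implicit Defensive.

(* A maximal left ideal never contains u - f d with u a unit, f idempotent and
   d in Delta(R).  A tripotent e is a unit multiple of the idempotent e^2, so if
   d in Delta(R) were outside a maximal left ideal M, writing the c with
   1 - c d in M as c = e + d' would contradict this: in a DT ring
   Delta(R) <= J(R).  Hence r^3 - r = (e + d)^3 - (e + d) is in J(R) for all r,
   in particular 6 = 2^3 - 2 is.  With I_n = {x | n x in J(R)}, the ring R/I_3
   has characteristic 2 and R/I_4 characteristic 3, both satisfy x^3 = x,
   4 + (1 - 4) = 1 with 4 in I_3 and 1 - 4 in I_4, and I_3 and I_4 intersect
   in J(R) because x = 4x - 3x. *)

Section Units.
Variable R : pzRingType.
Implicit Types a c d u v : R.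

Lemma is_unit1 : is_unit (1 : R).
Proof. by exists 1; rewrite mulr1. Qed.

Lemma is_unitN u : is_unit u -> is_unit (- u).
Proof. by case=> v [uv vu]; exists (- v); rewrite !mulrNN uv vu. Qed.

Lemma is_unitM u v : is_unit u -> is_unit v -> is_unit (u * v).
Proof.
move=> [u' [uu' u'u]] [v' [vv' v'v]]; exists (v' * u'); split.
  by rewrite mulrA -(mulrA u) vv' mulr1.
by rewrite mulrA -(mulrA v') u'u mulr1.
Qed.

Lemma is_unit1D_sqr0 c : c * c = 0 -> is_unit (1 + c).
Proof.
move=> cc; exists (1 - c); split.
  by rewrite mulrDl mul1r mulrBr mulr1 cc subr0 subrK.
by rewrite mulrBl mul1r mulrDr mulr1 cc addr0 addrK.
Qed.

Lemma DeltaN d : Delta d -> Delta (- d).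
Proof. by move=> dD u /is_unitN/dD/is_unitN; rewrite opprD opprK. Qed.

Lemma is_unitB_Delta u d : is_unit u -> Delta d -> is_unit (u - d).
Proof. by move=> uU /DeltaN dD; rewrite addrC; apply: dD. Qed.

Lemma DeltaMr d v : Delta d -> is_unit v -> Delta (d * v).
Proof.
move=> dD [v' [vv' v'v]] u uU.
have -> : d * v + u = (d + u * v') * v by rewrite mulrDl -mulrA v'v mulr1.
by apply: is_unitM; [apply/dD/(is_unitM uU); exists v | exists v'].
Qed.

Lemma is_unit1B_DeltaM a c : Delta a -> Delta c -> is_unit (1 - a * c).
Proof.
move=> aD cD; have -> : 1 - a * c = a * (1 - c) + (1 - a).
  by rewrite mulrBr mulr1 [RHS]addrC addrA subrK.
by apply: (DeltaMr aD (is_unitB_Delta is_unit1 cD)); apply: is_unitB_Delta is_unit1 aD.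
Qed.

End Units.

Section MaximalLeftIdeals.
Variable R : pzRingType.
Implicit Types (M K : R -> Prop) (r s u x y : R).

Lemma left_idealB M x y : left_ideal M -> M x -> M y -> M (x - y).
Proof. by case=> _ [MB _]; apply: MB. Qed.

Lemma left_idealMl M r x : left_ideal M -> M x -> M (r * x).
Proof. by case=> _ [_ MMl]; apply: MMl. Qed.

Lemma left_idealD M x y : left_ideal M -> M x -> M y -> M (x + y).
Proof.
move=> Mleft Mx My; have -> : x + y = x - (0 - y) by rewrite sub0r opprK.
by do 2 apply: left_idealB => //; case: Mleft.
Qed.

Lemma maximal_left_ideal_unit M u : maximal_left_ideal M -> is_unit u -> ~ M u.
Proof.
move=> [Mleft [M1 _]] [v [_ vu]] Mu; apply: M1.
by rewrite -vu; apply: left_idealMl.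
Qed.

(* Maximality applied to the left ideal M + R x. *)
Lemma maximal_left_ideal_linv M x : maximal_left_ideal M -> ~ M x ->
  exists c, M (1 - c * x).
Proof.
move=> [Mleft [_ Mmax]] Mx.
pose K y := exists m c, M m /\ y = m + c * x.
have Kleft : left_ideal K.
  split; first by exists 0, 0; rewrite mul0r addr0; split => //; case: Mleft.
  split.
    move=> _ _ [m1 [c1 [Mm1 ->]]] [m2 [c2 [Mm2 ->]]].
    exists (m1 - m2), (c1 - c2); split; first exact: left_idealB.
    by rewrite mulrBl opprD addrACA.
  move=> r _ [m [c [Mm ->]]]; exists (r * m), (r * c).
  by split; [apply: left_idealMl | rewrite mulrDr mulrA].
have MK y : M y -> K y by exists y, 0; rewrite mul0r addr0.
have [KM | [m [c [Mm m1]]]] := Mmax K Kleft MK.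
  by case: Mx; apply: KM; exists 0, 1; rewrite mul1r add0r; split => //; case: Mleft.
by exists c; rewrite m1 addrK.
Qed.

Lemma maximal_left_ideal_colon M s : maximal_left_ideal M -> ~ M s ->
  maximal_left_ideal (fun t => M (t * s)).
Proof.
move=> Mmaximal Ms; have [Mleft [_ Mmax]] := Mmaximal.
split.
  split; first by rewrite mul0r; case: Mleft.
  split; first by move=> x y Mx My; rewrite mulrBl; apply: left_idealB.
  by move=> r x Mx; rewrite -mulrA; apply: left_idealMl.
split; first by rewrite mul1r.
move=> K Kleft MK; have [KM | /existsPNP [k Kk Mks]] := EM (forall y, K y -> M (y * s)).
  by left.
right; have [b Mb] := maximal_left_ideal_linv Mmaximal Mks.
have M1sbk : M ((1 - s * b * k) * s).
  have -> : (1 - s * b * k) * s = s * (1 - b * (k * s)).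
    by rewrite mulrBl mulrBr mul1r mulr1 !mulrA.
  exact: left_idealMl.
by rewrite -(subrK (s * b * k) 1); apply: left_idealD => //; [apply: MK | apply: left_idealMl].
Qed.

End MaximalLeftIdeals.

Lemma maximal_left_ideal_unitB_idemM_Delta (R : pzRingType) (M : R -> Prop)
    (u f d : R) :
  maximal_left_ideal M -> is_unit u -> f * f = f -> Delta d -> ~ M (u - f * d).
Proof.
move=> Mmax uU ff dD Mufd; have Mleft := proj1 Mmax.
have Mfd : ~ M (f * d).
  move=> Mfd; apply: (maximal_left_ideal_unit Mmax uU).
  by rewrite -(subrK (f * d) u); apply: (left_idealD Mleft).
(* c0 inverts f d modulo M; the unit A = 1 + g c f then moves A u - d into M. *)
have [c0 Mc0] := maximal_left_ideal_linv Mmax Mfd.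
pose c := d * c0; pose g := 1 - f; pose A := 1 + g * c * f.
have Mdc : M (d - c * (f * d)).
  by have := left_idealMl d Mleft Mc0; rewrite mulrBr mulr1 mulrA.
have AU : is_unit A.
  have fg : f * g = 0 by rewrite mulrBr mulr1 ff subrr.
  apply: is_unit1D_sqr0; have -> : g * c * f * (g * c * f) = g * c * (f * g) * (c * f).
    by rewrite !mulrA.
  by rewrite fg mulr0 mul0r.
have Af : A * f = f + g * c * f by rewrite mulrDl mul1r -mulrA ff.
have fg1 : f + g = 1 by rewrite subrKC.
clearbody c g A.
apply: (maximal_left_ideal_unit Mmax (is_unitB_Delta (is_unitM AU uU) dD)).
have -> : A * u - d = A * (u - f * d) - g * (d - c * (f * d)).
  rewrite mulrBr mulrA Af mulrDl mulrBr !mulrA.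
  have dfg : d = f * d + g * d by rewrite -mulrDl fg1 mul1r.
  by rewrite {1}dfg opprB !opprD !addrA addrNK.
by apply: (left_idealB Mleft); apply: (left_idealMl _ Mleft).
Qed.

Section Tripotent.
Variables (R : pzRingType) (e : R).
Hypothesis e3 : tripotent e.

Lemma tripotent_sqr_idem : e ^+ 2 * e ^+ 2 = e ^+ 2.
Proof. by rewrite -exprD (exprSr e 3) e3 expr2. Qed.

(* w = e + (1 - e^2) is an involution. *)
Lemma tripotent_unit_mul_sqr : exists2 w : R, is_unit w & w * e = e ^+ 2.
Proof.
pose g := 1 - e ^+ 2.
have eg : e * g = 0 by rewrite mulrBr mulr1 -exprS e3 subrr.
have ge : g * e = 0 by rewrite mulrBl mul1r -exprSr e3 subrr.
have gg : g * g = g.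
  by rewrite [in LHS]/g mulrBr mulr1 mulrBl mul1r tripotent_sqr_idem subrr subr0.
have e2g : e ^+ 2 + g = 1 by rewrite subrKC.
clearbody g; exists (e + g); last by rewrite mulrDl ge addr0 expr2.
by exists (e + g); rewrite mulrDl !mulrDr eg ge gg addr0 add0r -expr2.
Qed.

End Tripotent.

Record ideal (R : pzRingType) := Ideal {
  ideal_mem :> R -> Prop;
  ideal0 : ideal_mem 0;
  idealB : forall x y, ideal_mem x -> ideal_mem y -> ideal_mem (x - y);
  idealMl : forall r x, ideal_mem x -> ideal_mem (r * x);
  idealMr : forall x r, ideal_mem x -> ideal_mem (x * r) }.

Section IdealTheory.
Variables (R : pzRingType) (I : ideal R).

Lemma idealN x : I x -> I (- x).
Proof. by move=> Ix; rewrite -sub0r; apply: idealB => //; apply: ideal0. Qed.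

Lemma idealD x y : I x -> I y -> I (x + y).
Proof. by move=> Ix Iy; rewrite -[y]opprK; apply: idealB => //; apply: idealN. Qed.

Definition ideal_equiv : rel R := fun x y => `[< I (x - y) >].

Lemma ideal_equiv_refl : reflexive ideal_equiv.
Proof. by move=> x; apply/asboolP; rewrite subrr; apply: ideal0. Qed.

Lemma ideal_equiv_sym : symmetric ideal_equiv.
Proof. by move=> x y; apply/asboolP/asboolP => /idealN; rewrite opprB. Qed.

Lemma ideal_equiv_trans : transitive ideal_equiv.
Proof.
move=> y x z /asboolP Ixy /asboolP Iyz; apply/asboolP.
by rewrite -[x](subrK y) -addrA; apply: idealD.
Qed.

Canonical ideal_equiv_rel :=
  EquivRel ideal_equiv ideal_equiv_refl ideal_equiv_sym ideal_equiv_trans.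

Definition quot := {eq_quot ideal_equiv}.
HB.instance Definition _ := Choice.on quot.

Lemma quot_eqP x y : \pi_quot x = \pi_quot y <-> I (x - y).
Proof. by split=> [/eqmodP/asboolP | Ixy]; last apply/eqmodP/asboolP. Qed.

Lemma quot_reprP x : I (x - repr (\pi_quot x)).
Proof. by apply/quot_eqP; rewrite reprK. Qed.

Definition quot_zero := lift_cst quot 0.
Definition quot_one := lift_cst quot 1.
Definition quot_opp := lift_op1 quot -%R.
Definition quot_add := lift_op2 quot +%R.
Definition quot_mul := lift_op2 quot *%R.

Lemma pi_quot_zero : \pi_quot 0 = quot_zero.
Proof. by unlock quot_zero. Qed.
Lemma pi_quot_one : \pi_quot 1 = quot_one.
Proof. by unlock quot_one. Qed.
Lemma pi_quot_opp : {morph \pi_quot : x / - x >-> quot_opp x}.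
Proof.
move=> x; unlock quot_opp; apply/quot_eqP.
by rewrite -opprD; apply/idealN/quot_reprP.
Qed.
Lemma pi_quot_add : {morph \pi_quot : x y / x + y >-> quot_add x y}.
Proof.
move=> x y; unlock quot_add; apply/quot_eqP.
by rewrite opprD addrACA; apply: idealD; apply: quot_reprP.
Qed.
Lemma pi_quot_mul : {morph \pi_quot : x y / x * y >-> quot_mul x y}.
Proof.
move=> x y; unlock quot_mul; apply/quot_eqP.
set x' := repr (\pi_quot x); set y' := repr (\pi_quot y).
have -> : x * y - x' * y' = (x - x') * y + x' * (y - y').
  by rewrite mulrBl mulrBr addrA subrK.
by apply: idealD; [apply: idealMr | apply: idealMl]; apply: quot_reprP.
Qed.

Canonical pi_quot_zero_morph := PiMorph pi_quot_zero.
Canonical pi_quot_one_morph := PiMorph pi_quot_one.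
Canonical pi_quot_opp_morph := PiMorph1 pi_quot_opp.
Canonical pi_quot_add_morph := PiMorph2 pi_quot_add.
Canonical pi_quot_mul_morph := PiMorph2 pi_quot_mul.

Ltac quot_elim := repeat (let x := fresh "x" in elim/quotW=> x).

Lemma quot_addA : associative quot_add.
Proof. by quot_elim; rewrite !piE addrA. Qed.
Lemma quot_addC : commutative quot_add.
Proof. by quot_elim; rewrite !piE addrC. Qed.
Lemma quot_add0 : left_id quot_zero quot_add.
Proof. by quot_elim; rewrite !piE add0r. Qed.
Lemma quot_addN : left_inverse quot_zero quot_opp quot_add.
Proof. by quot_elim; rewrite !piE addNr. Qed.
Lemma quot_mulA : associative quot_mul.
Proof. by quot_elim; rewrite !piE mulrA. Qed.
Lemma quot_mul1 : left_id quot_one quot_mul.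
Proof. by quot_elim; rewrite !piE mul1r. Qed.
Lemma quot_mulr1 : right_id quot_one quot_mul.
Proof. by quot_elim; rewrite !piE mulr1. Qed.
Lemma quot_mulDl : left_distributive quot_mul quot_add.
Proof. by quot_elim; rewrite !piE mulrDl. Qed.
Lemma quot_mulDr : right_distributive quot_mul quot_add.
Proof. by quot_elim; rewrite !piE mulrDr. Qed.

HB.instance Definition _ :=
  GRing.isZmodule.Build quot quot_addA quot_addC quot_add0 quot_addN.
HB.instance Definition _ :=
  GRing.Zmodule_isPzRing.Build quot quot_mulA quot_mul1 quot_mulr1 quot_mulDl quot_mulDr.

Definition quot_pi : R -> quot := \pi.

Lemma pi_quot_is_zmod_morphism : zmod_morphism quot_pi.
Proof. by move=> x y; rewrite /quot_pi pi_quot_add pi_quot_opp. Qed.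
Lemma pi_quot_is_monoid_morphism : monoid_morphism quot_pi.
Proof. by split=> [|x y]; rewrite /quot_pi ?pi_quot_one ?pi_quot_mul. Qed.

HB.instance Definition _ :=
  GRing.isZmodMorphism.Build R quot quot_pi pi_quot_is_zmod_morphism.
HB.instance Definition _ :=
  GRing.isMonoidMorphism.Build R quot quot_pi pi_quot_is_monoid_morphism.

Lemma quot_pi_eq0 x : quot_pi x = 0 <-> I x.
Proof. by rewrite -(rmorph0 quot_pi) quot_eqP subr0. Qed.

End IdealTheory.

Lemma quot_ind (R : pzRingType) (I : ideal R) (P : quot I -> Prop) :
  (forall x, P (quot_pi I x)) -> forall q, P q.
Proof. by move=> Px; elim/quotW. Qed.

Lemma quot_natr_eq0 (R : pzRingType) (I : ideal R) n :
  (n%:R : quot I) = 0 <-> I n%:R.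
Proof. by rewrite -(rmorph_nat (quot_pi I)) quot_pi_eq0. Qed.

Lemma quot_tripotent (R : pzRingType) (I : ideal R) :
  (forall r, I (r ^+ 3 - r)) -> forall q : quot I, q ^+ 3 = q.
Proof.
move=> Icube; elim/quot_ind => r; apply/eqP; rewrite -subr_eq0.
by rewrite -rmorphXn -rmorphB; apply/eqP/quot_pi_eq0.
Qed.

Section QuotPair.
Variables (R : pzRingType) (I K : ideal R).

Definition quot_pair (x : R) : quot I * quot K := (quot_pi I x, quot_pi K x).

Lemma quot_pair_is_zmod_morphism : zmod_morphism quot_pair.
Proof. by move=> x y; rewrite /quot_pair !rmorphB. Qed.
Lemma quot_pair_is_monoid_morphism : monoid_morphism quot_pair.
Proof. by split=> [|x y]; rewrite /quot_pair ?rmorph1 ?rmorphM. Qed.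

HB.instance Definition _ := GRing.isZmodMorphism.Build R (quot I * quot K)%type
  quot_pair quot_pair_is_zmod_morphism.
HB.instance Definition _ := GRing.isMonoidMorphism.Build R (quot I * quot K)%type
  quot_pair quot_pair_is_monoid_morphism.

Lemma quot_pair_eq0 x : quot_pair x = 0 <-> I x /\ K x.
Proof.
split=> [[/quot_pi_eq0 Ix /quot_pi_eq0 Kx] // | [Ix Kx]].
by rewrite /quot_pair (quot_pi_eq0 I x).2 // (quot_pi_eq0 K x).2.
Qed.

Lemma quot_pair_surj a : I a -> K (1 - a) ->
  forall q, exists x, quot_pair x = q.
Proof.
move=> Ia Ka [q1 q2]; elim/quot_ind: q1 => y1; elim/quot_ind: q2 => y2.
exists ((1 - a) * y1 + a * y2); congr pair; apply/quot_eqP.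
  have -> : (1 - a) * y1 + a * y2 - y1 = a * (y2 - y1).
    by rewrite mulrBl mul1r mulrBr addrAC [y1 - _ - _]addrAC subrr add0r addrC.
  exact: idealMr.
have -> : (1 - a) * y1 + a * y2 - y2 = (1 - a) * (y1 - y2).
  by rewrite mulrBr !mulrBl !mul1r -addrA opprB.
exact: idealMr.
Qed.

End QuotPair.

Section Jacobson.
Variable R : pzRingType.
Implicit Types x r s : R.

Lemma jacobson0 : jacobson (0 : R).
Proof. by move=> M [[]]. Qed.

Lemma jacobsonB x y : jacobson x -> jacobson y -> jacobson (x - y).
Proof. by move=> Jx Jy M Mmax; apply: (left_idealB (proj1 Mmax)); [apply: Jx | apply: Jy]. Qed.

Lemma jacobsonMl r x : jacobson x -> jacobson (r * x).
Proof. by move=> Jx M Mmax; apply: (left_idealMl _ (proj1 Mmax)); apply: Jx. Qed.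

Lemma jacobsonMr x s : jacobson x -> jacobson (x * s).
Proof.
move=> Jx M Mmax; have [Ms | Ms] := EM (M s).
  by apply: left_idealMl Ms; case: Mmax.
exact: Jx _ (maximal_left_ideal_colon Mmax Ms).
Qed.

Definition jacobson_ideal : ideal R :=
  @Ideal R (@jacobson R) jacobson0 jacobsonB jacobsonMl jacobsonMr.

End Jacobson.

Section ColonNat.
Variables (R : pzRingType) (I : ideal R) (n : nat).

Lemma colon_nat0 : I (n%:R * 0).
Proof. by rewrite mulr0; apply: ideal0. Qed.

Lemma colon_natB x y : I (n%:R * x) -> I (n%:R * y) -> I (n%:R * (x - y)).
Proof. by rewrite mulrBr; apply: idealB. Qed.

Lemma colon_natMl r x : I (n%:R * x) -> I (n%:R * (r * x)).
Proof. by move=> Inx; rewrite mulrA -(commr_nat r n) -mulrA; apply: idealMl. Qed.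

Lemma colon_natMr x r : I (n%:R * x) -> I (n%:R * (x * r)).
Proof. by rewrite mulrA; apply: idealMr. Qed.

Definition colon_nat_ideal : ideal R :=
  @Ideal R (fun x => I (n%:R * x)) colon_nat0 colon_natB colon_natMl colon_natMr.

End ColonNat.

Lemma boolean_ring_char2 (S : pzRingType) :
  (2%:R : S) = 0 -> (forall x : S, x ^+ 3 = x) -> boolean_ring S.
Proof.
move=> S2 S3 x; have xx : x + x = 0 by rewrite -mulr2n -mulr_natr S2 mulr0.
have := S3 (x + 1); rewrite exprSr sqrrD1 mulr2n xx addr0.
rewrite mulrDl mul1r mulrDr mulr1 -exprSr S3 addrA => /addIr.
by rewrite addrAC xx add0r.
Qed.

Section DTRing.
Variable R : pzRingType.
Hypothesis hR : DT_ring R.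
Implicit Types d r : R.

Lemma Delta_jacobson d : Delta d -> jacobson d.
Proof.
move=> dD M Mmax; apply: contrapT => Md.
have [y My] := maximal_left_ideal_linv Mmax Md.
have [e [d' [e3 [d'D yE]]]] := hR y.
have [w wU we] := tripotent_unit_mul_sqr e3.
apply: (maximal_left_ideal_unitB_idemM_Delta Mmax _ (tripotent_sqr_idem e3) dD).
  exact: (is_unitM wU (is_unit1B_DeltaM d'D dD)).
have -> : w * (1 - d' * d) - e ^+ 2 * d = w * (1 - y * d).
  by rewrite -we -mulrA -mulrBr yE mulrDl opprD addrA addrAC.
exact: left_idealMl (proj1 Mmax) My.
Qed.

Lemma jacobson_cubeB r : jacobson (r ^+ 3 - r).
Proof.
have [e [d [e3 [dD ->]]]] := hR r.
have /(quot_pi_eq0 (jacobson_ideal R)) pd0 := Delta_jacobson dD.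
apply/(quot_pi_eq0 (jacobson_ideal R)).
by rewrite rmorphB rmorphXn rmorphD /= pd0 addr0 -rmorphXn e3 subrr.
Qed.

Lemma jacobson_natr n : (6 %| n)%N -> jacobson (n%:R : R).
Proof.
case/dvdnP=> k ->; rewrite natrM; apply: jacobsonMl.
by have := jacobson_cubeB 2%:R; rewrite -natrX -natrB.
Qed.

End DTRing.

(* R/J(R) ≅ R1 × R2 is expressed via the first isomorphism theorem:
   a surjective ring morphism f : R -> R1 × R2 whose kernel is J(R). *)
Theorem theorem4p8 (R : pzRingType) (hR : DT_ring R) :
  exists (R1 R2 : pzRingType) (f : {rmorphism R -> R1 * R2}),
    (forall y : R1 * R2, exists x : R, f x = y) /\
    (forall x : R, f x = 0 <-> jacobson x) /\
    (zero_ring R1 \/ (~ zero_ring R1 /\ boolean_ring R1)) /\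
    (zero_ring R2 \/ (~ zero_ring R2 /\ yaqub_ring R2)).
Proof.
pose J := jacobson_ideal R; pose I3 := colon_nat_ideal J 3; pose I4 := colon_nat_ideal J 4.
have J6 n : (6 %| n)%N -> J n%:R := @jacobson_natr R hR n.
have tri n (q : quot (colon_nat_ideal J n)) : q ^+ 3 = q.
  by apply: quot_tripotent => r; apply: jacobsonMl; apply: jacobson_cubeB.
exists (quot I3), (quot I4), (quot_pair I3 I4); split.
  apply: (quot_pair_surj (a := 4%:R)); first by rewrite /= -natrM; apply: J6.
  rewrite /= mulrBr mulr1 -natrM -opprB -natrB // -sub0r.
  by apply: jacobsonB; [apply: jacobson0 | apply: J6].
split.
  move=> x; rewrite quot_pair_eq0; split=> [[J3x J4x] | Jx].
    have -> : x = 4%:R * x - 3%:R * x by rewrite -mulrBl -natrB // mul1r.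
    exact: jacobsonB J4x J3x.
  by split; apply: idealMl.
split.
  have [|nonzero] := EM (zero_ring (quot I3)); [by left | right; split=> //].
  apply: boolean_ring_char2 (tri 3) => //.
  by apply/quot_natr_eq0; rewrite /= -natrM; apply: J6.
have [|nonzero] := EM (zero_ring (quot I4)); [by left | right; split=> //].
split; last exact: tri.
by exists 1%N; rewrite expr1; apply/quot_natr_eq0; rewrite /= -natrM; apply: J6.
Qed.
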